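(* Let $\phi\in\mathbb{Z}[X]$ have degree at least one, let $x\neq0$ be any root of $\phi$, let $f\in\mathbb{Z}[X^{\pm}]$ and let $a,b\in\mathbb{N}$ with $a\neq b$. If $\phi^2$ divides $X^a-X^bf$, then $a-b=\frac{xf'(x)}{f(x)}$.
   Context: $\mathbb{Z}[X^{\pm}]$ is the ring of integer Laurent polynomials; $f'$ denotes the formal derivative of $f$. *)

From mathcomp Require Import all_boot all_order all_algebra all_field.
Set Implicit Arguments. Unset Strict Implicit. Unset Printing Implicit Defensive.
Import Order.TTheory GRing.Theory Num.Theory.
Local Open Scope ring_scope.

(* Integer Laurent polynomials Z[X^{+-}]: a pair (g, k) represents g * X^(-k),
   with g : {poly int}.  Equality in Z[X^{+-}] is the relation [leq] below. *)
Definition laurent := ({poly int} * nat)%type.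

Definition leq (f g : laurent) : Prop := f.1 * 'X^(g.2) = g.1 * 'X^(f.2).
Definition lmul (f g : laurent) : laurent := (f.1 * g.1, (f.2 + g.2)%N).
Definition lsub (f g : laurent) : laurent :=
  (f.1 * 'X^(g.2) - g.1 * 'X^(f.2), (f.2 + g.2)%N).
Definition lXn (n : nat) : laurent := ('X^n, 0%N).
Definition lpoly (p : {poly int}) : laurent := (p, 0%N).
Definition ldvd (d f : laurent) : Prop := exists h : laurent, leq f (lmul d h).
(* formal derivative: (g X^-k)' = (X g' - k g) X^-(k+1) *)
Definition lderiv (f : laurent) : laurent := ('X * f.1^`() - f.1 *+ f.2, f.2.+1).
Definition leval (F : fieldType) (f : laurent) (x : F) : F :=
  (map_poly (intr : int -> F) f.1).[x] / x ^+ f.2.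

From Pilot Require Import Defs.
From mathcomp Require Import all_boot all_order all_algebra all_field.
From mathcomp Require Import ring.
Import Order.TTheory GRing.Theory Num.Theory.
Local Open Scope ring_scope.

(* Clearing the Laurent denominators, phi^2 divides P * X^m with
   P = X^(a+k) - X^b g, where f = g X^-k; as x <> 0, x is a double root of P.
   Then P(x) = 0 reads x^(a+k) = x^b g(x), and substituting this into x P'(x) = 0
   gives the Euler identity x g'(x) = (a + k - b) g(x); the quotient rule for
   f = g X^-k turns it into x f'(x) / f(x) = a - b. *)

Lemma root_deriv_sqr_mulr (R : comNzRingType) (q h : {poly R}) (x : R) :
  root q x -> root (q ^+ 2 * h)^`() x.
Proof.
by move=> /rootP qx; apply/rootP; rewrite !derivM !hornerE qx; ring.
Qed.

Lemma double_root_mulr_cancel (R : idomainType) (p q : {poly R}) (x : R) :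
  q.[x] != 0 -> root (p * q) x -> root (p * q)^`() x ->
  root p x /\ root p^`() x.
Proof.
move=> qx0 /rootP; rewrite hornerM => /eqP; rewrite mulf_eq0 (negbTE qx0) orbF.
move=> /eqP px /rootP; rewrite derivM !hornerE px mul0r addr0 => /eqP.
by rewrite mulf_eq0 (negbTE qx0) orbF => /eqP p'x; split; apply/rootP.
Qed.

Lemma horner_Xderiv_Xn (R : comNzRingType) (x : R) (n : nat) :
  x * ('X^n)^`().[x] = n%:R * x ^+ n.
Proof.
rewrite derivXn hornerMn hornerXn; case: n => [|n] /=; first by rewrite !mulr0n mulr0 mul0r.
by rewrite mulrnAr -exprS mulr_natl.
Qed.

Section MonomialDifference.
Context {R : idomainType} {x : R} {n m : nat} {g : {poly R}}.
Hypotheses (x_neq0 : x != 0) (root_x : root ('X^n - 'X^m * g) x).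

Lemma root_XnBXmul_horner : x ^+ n = x ^+ m * g.[x].
Proof. by apply/eqP; rewrite -subr_eq0; move/rootP: root_x; rewrite !hornerE => ->. Qed.

Lemma root_XnBXmul_horner_neq0 : g.[x] != 0.
Proof.
by apply: contra_neq (expf_neq0 n x_neq0) => gx0; rewrite root_XnBXmul_horner gx0 mulr0.
Qed.

Lemma root_XnBXmul_deriv : root ('X^n - 'X^m * g)^`() x ->
  x * g^`().[x] = (n%:R - m%:R) * g.[x].
Proof.
move=> /rootP; rewrite derivB derivM !hornerE => /(congr1 (GRing.mul x)).
have -> : forall dn dm g' : R, x * (dn - (dm * g.[x] + x ^+ m * g'))
    = x * dn - x * dm * g.[x] - x ^+ m * (x * g') by move=> *; ring.
rewrite !horner_Xderiv_Xn root_XnBXmul_horner mulr0.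
have -> : forall c : R, n%:R * (x ^+ m * g.[x]) - m%:R * x ^+ m * g.[x] - x ^+ m * c
    = x ^+ m * ((n%:R - m%:R) * g.[x] - c) by move=> *; ring.
by move/eqP; rewrite mulf_eq0 (negbTE (expf_neq0 m x_neq0)) subr_eq0 eq_sym => /eqP.
Qed.
End MonomialDifference.

Lemma ldvd_lpoly (d : {poly int}) (p : laurent) :
  ldvd (lpoly d) p -> exists h m, p.1 * 'X^m = d * h.
Proof. by case=> -[h m]; rewrite /Defs.leq /= add0n -mulrA => E; exists (h * 'X^(p.2)), m. Qed.

Lemma leval_lderiv_ratio (F : fieldType) (f : laurent) (x c : F) :
  let g := map_poly (intr : int -> F) f.1 in
  x != 0 -> g.[x] != 0 -> x * g^`().[x] = (c + f.2%:R) * g.[x] ->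
  x * leval (lderiv f) x / leval f x = c.
Proof.
case: f => p k g /= x0 gx0 gE.
rewrite /leval /lderiv /= rmorphB rmorphM rmorphMn /= map_polyX -deriv_map -/g.
rewrite hornerD hornerN hornerMn hornerM hornerX gE exprSr -mulr_natr.
by field; rewrite gx0 x0 expf_neq0.
Qed.

Theorem lemma15 (phi : {poly int}) (x : algC) (f : laurent) (a b : nat) :
  (2 <= size phi)%N ->
  x != 0 ->
  root (map_poly (intr : int -> algC) phi) x ->
  a <> b ->
  ldvd (lpoly (phi ^+ 2)) (lsub (lXn a) (lmul (lXn b) f)) ->
  ((a%:Z - b%:Z)%:~R : algC) = x * leval (lderiv f) x / leval f x.
Proof.
case: f => p k _ x0 phi_x _ /ldvd_lpoly[h [m]] /=.
rewrite add0n expr0 mulr1 -exprD => /(congr1 (map_poly (intr : int -> algC))).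
rewrite !(rmorphXn, rmorphM, rmorphB) /= !map_polyX.
set g := map_poly _ p; set P := _ - _ => E.
have [P_x P'_x] : root P x /\ root P^`() x.
  apply: (@double_root_mulr_cancel _ _ 'X^m); first by rewrite hornerXn expf_neq0.
    by rewrite E rootE !hornerE (rootP phi_x) expr0n mul0r.
  by rewrite E root_deriv_sqr_mulr.
apply/esym/leval_lderiv_ratio => //=; first exact: root_XnBXmul_horner_neq0 P_x.
by rewrite (root_XnBXmul_deriv x0 P_x P'_x) -/g natrD; congr (_ * _); ring.
Qed.
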